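(* Let $0<a,b<1$, $f\ge3$, and for a rational function $u$ of $(r,y,z)$ write $u[\mathbf 1]$ for its value at $r=y=z=1$. With $\overline w_{m,n}$, $q^*_\ell$, $w^*_\ell$ as in the context: 1. $\overline w_{f-\ell,f+j}[\mathbf 1]=a^\ell b^{j-1}\big(j+\ell\tfrac ba-(\ell+j-1)b\big)$ for all $1\le\ell\le f$, $j\ge1$; 2. $\overline w_{f+j,f-\ell}[\mathbf 1]=a^{\ell-1}b^{j}\big((j+1)+(\ell-1)\tfrac ba-(\ell+j-1)b\big)$ for all $2\le\ell\le f$, $j\ge0$; 3. $q^*_\ell(a)[\mathbf 1]=\ell a^{\ell-1}$ and $w^*_\ell(a)[\mathbf 1]=a^{\ell-1}(\ell-(\ell-1)a)$ for all $\ell\ge1$.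
   Context: Let $r,y,z$ be indeterminates. For $c\in(0,1)$: $\omega_c:=1-(1-c)^2r^2y^2z^2$, $\tau_c:=1+(1-c)^2r^2z^2y(1-y)$, $x_c:=c^2z^2\tau_c^2$, $\beta_c:=1+z^2(c^2-(1-c)^2r^2(y^2+c^2(1-y)^2z^2))$; $w^*_0(c):=(\beta_c-\omega_c)/x_c$, $w^*_1(c):=1$, $w^*_{n+1}(c):=\beta_cw^*_n(c)-x_cw^*_{n-1}(c)$ ($n\ge1$); $q^*_0(c):=-(1-y)(1+y+(1-c)^2r^2y^2z^2(1-y))/\tau_c^2$, $q^*_1(c):=y^2$, $q^*_{n+1}(c):=\beta_cq^*_n(c)-x_cq^*_{n-1}(c)$ ($n\ge1$). Also $\tau(a,b):=1+(1-a)(1-b)r^2z^2y(1-y)$, $x(a,b):=b^2z^2\tau(a,b)^2$, $x(b,a):=a^2z^2\tau(a,b)^2$, $\beta(a,b):=\beta_b-(b-a)b^2(1-b)r^2(1-y)^2z^4$, $\beta(b,a):=\beta_a-(a-b)a^2(1-a)r^2(1-y)^2z^4$. Define $\overline w_{m,m+1}=\overline w_{m+1,m}:=1$ ($m\ge0$), and for $n-m\ge2$ (indices $\ge0$): upward: $\overline w_{m,m+\ell}:=w^*_\ell(a)$ if $m+\ell\le f$, $:=w^*_\ell(b)$ if $f\le m$; $\overline w_{f-\ell,f+1}:=\frac{1-b}{1-a}w^*_{\ell+1}(a)+\frac{b-a}{1-a}w^*_\ell(a)$ ($1\le\ell\le f$); $\overline w_{m,f+2}:=\beta(a,b)\overline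 w_{m,f+1}-x(a,b)\overline w_{m,f}$ ($m\le f-1$); $\overline w_{m,f+j+1}:=\beta_b\overline w_{m,f+j}-x_b\overline w_{m,f+j-1}$ ($m\le f-1$, $j\ge2$). Downward: $\overline w_{m+\ell,m}:=w^*_\ell(a)$ if $m+\ell\le f-1$, $:=w^*_\ell(b)$ if $f-1\le m$; $\overline w_{f+j,f-2}:=\frac{1-a}{1-b}w^*_{j+2}(b)+\frac{a-b}{1-b}w^*_{j+1}(b)$ ($j\ge0$); $\overline w_{n,f-3}:=\beta(b,a)\overline w_{n,f-2}-x(b,a)\overline w_{n,f-1}$ ($n\ge f$); $\overline w_{n,f-\ell-2}:=\beta_a\overline w_{n,f-\ell-1}-x_a\overline w_{n,f-\ell}$ ($n\ge f$, $\ell\ge2$). *)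

From mathcomp Require Import all_boot all_order all_algebra.
Set Implicit Arguments. Unset Strict Implicit. Unset Printing Implicit Defensive.
Import Order.TTheory GRing.Theory Num.Theory.
Local Open Scope ring_scope.

Section Defs.
Variable R : realFieldType.
Implicit Types (c a b r y z : R).

Fixpoint lrec (u0 u1 : R) (bt xt : nat -> R) (n : nat) : R :=
  match n with
  | 0 => u0
  | S p => match p with
           | 0 => u1
           | S q => bt q * lrec u0 u1 bt xt p - xt q * lrec u0 u1 bt xt q
           end
  end.

Definition omega c r y z : R := 1 - (1 - c) ^+ 2 * r ^+ 2 * y ^+ 2 * z ^+ 2.
Definition tau c r y z : R := 1 + (1 - c) ^+ 2 * r ^+ 2 * z ^+ 2 * y * (1 - y).
Definition xc c r y z : R := c ^+ 2 * z ^+ 2 * (tau c r y z) ^+ 2.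
Definition betac c r y z : R :=
  1 + z ^+ 2 * (c ^+ 2 - (1 - c) ^+ 2 * r ^+ 2 * (y ^+ 2 + c ^+ 2 * (1 - y) ^+ 2 * z ^+ 2)).

Definition wstar c r y z (n : nat) : R :=
  lrec ((betac c r y z - omega c r y z) / xc c r y z) 1
       (fun _ => betac c r y z) (fun _ => xc c r y z) n.

Definition qstar c r y z (n : nat) : R :=
  lrec (- ((1 - y) * (1 + y + (1 - c) ^+ 2 * r ^+ 2 * y ^+ 2 * z ^+ 2 * (1 - y)))
          / (tau c r y z) ^+ 2)
       (y ^+ 2) (fun _ => betac c r y z) (fun _ => xc c r y z) n.

Definition tau2 a b r y z : R := 1 + (1 - a) * (1 - b) * r ^+ 2 * z ^+ 2 * y * (1 - y).
Definition xmix a b r y z : R := b ^+ 2 * z ^+ 2 * (tau2 a b r y z) ^+ 2.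
Definition betamix a b r y z : R :=
  betac b r y z - (b - a) * b ^+ 2 * (1 - b) * r ^+ 2 * (1 - y) ^+ 2 * z ^+ 4.

(* \overline w_{m,n}; the diagonal m = n is not defined in the paper (set to 0). *)
Definition wbar a b (f : nat) r y z (m n : nat) : R :=
  if n == m.+1 then 1 else
  if m == n.+1 then 1 else
  if (m.+2 <= n)%N then
    (if (n <= f)%N then wstar a r y z (n - m)%N
     else if (f <= m)%N then wstar b r y z (n - m)%N
     else (* m < f < n : value is the (n-f)-th term of k |-> wbar_{m,f+k} *)
       lrec (wstar a r y z (f - m)%N)
            ((1 - b) / (1 - a) * wstar a r y z (f - m)%N.+1
               + (b - a) / (1 - a) * wstar a r y z (f - m)%N)
            (fun k => if k == 0 then betamix a b r y z else betac b r y z)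
            (fun k => if k == 0 then xmix a b r y z else xc b r y z)
            (n - f)%N)
  else if (n.+2 <= m)%N then
    (if (m.+1 <= f)%N then wstar a r y z (m - n)%N
     else if (f <= n.+1)%N then wstar b r y z (m - n)%N
     else (* n <= f-2, m >= f : value is the (f-1-n)-th term of k |-> wbar_{m,f-1-k} *)
       lrec (wstar b r y z (m - f)%N.+1)
            ((1 - a) / (1 - b) * wstar b r y z (m - f)%N.+2
               + (a - b) / (1 - b) * wstar b r y z (m - f)%N.+1)
            (fun k => if k == 0 then betamix b a r y z else betac a r y z)
            (fun k => if k == 0 then xmix b a r y z else xc a r y z)
            (f.-1 - n)%N)
  else 0.

End Defs.

(* At r = y = z = 1 every recursion coefficient collapses: beta_c = 2c and
   x_c = c^2, and also beta(a,b) = 2b, x(a,b) = b^2 at the junction.  The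
   characteristic polynomial t^2 - 2ct + c^2 then has the double root c, so
   every sequence involved is c^n (P + nQ) with P, Q read off from its first
   two terms; the formulas are these closed forms, with the initial data of
   the mixed sequences computed from w*(a) resp. w*(b). *)
From mathcomp Require Import all_boot all_order all_algebra.
From mathcomp Require Import zify ring.
Import Order.TTheory GRing.Theory Num.Theory.
Local Open Scope ring_scope.

Section DoubleRoot.
Variable R : realFieldType.

Lemma lrecSS (u0 u1 : R) bt xt n :
  lrec u0 u1 bt xt n.+2 = bt n * lrec u0 u1 bt xt n.+1 - xt n * lrec u0 u1 bt xt n.
Proof. by []. Qed.

Lemma lrec_double_root (c u0 u1 : R) bt xt :
  c != 0 -> (forall k, bt k = 2 * c) -> (forall k, xt k = c ^+ 2) ->
  forall n, lrec u0 u1 bt xt n = c ^+ n * (u0 + n%:R * (u1 / c - u0)).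
Proof.
move=> c0 hb hx.
suff H n : lrec u0 u1 bt xt n = c ^+ n * (u0 + n%:R * (u1 / c - u0))
        /\ lrec u0 u1 bt xt n.+1 = c ^+ n.+1 * (u0 + n.+1%:R * (u1 / c - u0)).
  by move=> n; case: (H n).
elim: n => [|n [IHn IHSn]]; first by split=> /=; field.
by split=> //; rewrite lrecSS IHn IHSn hb hx -!natr1 !exprS; ring.
Qed.

Lemma betac1 (c : R) : betac c 1 1 1 = 2 * c.
Proof. by rewrite /betac; ring. Qed.

Lemma xc1 (c : R) : xc c 1 1 1 = c ^+ 2.
Proof. by rewrite /xc /tau; ring. Qed.

Lemma betamix1 (a c : R) : betamix a c 1 1 1 = 2 * c.
Proof. by rewrite /betamix betac1; ring. Qed.

Lemma xmix1 (a c : R) : xmix a c 1 1 1 = c ^+ 2.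
Proof. by rewrite /xmix /tau2; ring. Qed.

Lemma wstar1 (c : R) k : c != 0 ->
  wstar c 1 1 1 k.+1 = c ^+ k * (k.+1%:R - k%:R * c).
Proof.
move=> c0; rewrite /wstar (@lrec_double_root c) //.
- by rewrite /omega betac1 xc1 exprS -natr1; field.
- by move=> _; rewrite betac1.
- by move=> _; rewrite xc1.
Qed.

Lemma qstar1 (c : R) k : c != 0 -> qstar c 1 1 1 k.+1 = k.+1%:R * c ^+ k.
Proof.
move=> c0; rewrite /qstar (@lrec_double_root c) //.
- by rewrite /tau exprS; field.
- by move=> _; rewrite betac1.
- by move=> _; rewrite xc1.
Qed.

End DoubleRoot.

Section Junction.
Variables (R : realFieldType) (a b : R) (f : nat).

Lemma wbar_up_cross r y z l j : (1 <= l <= f)%N -> (1 <= j)%N ->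
  wbar a b f r y z (f - l) (f + j)
  = lrec (wstar a r y z l)
         ((1 - b) / (1 - a) * wstar a r y z l.+1 + (b - a) / (1 - a) * wstar a r y z l)
         (fun k => if k == 0 then betamix a b r y z else betac b r y z)
         (fun k => if k == 0 then xmix a b r y z else xc b r y z) j.
Proof.
move=> /andP[l1 lf] j1; rewrite /wbar.
have -> : (f + j == (f - l).+1)%N = false by apply/eqP; lia.
have -> : (f - l == (f + j).+1)%N = false by apply/eqP; lia.
have -> : ((f - l).+2 <= f + j)%N by lia.
have -> : (f + j <= f)%N = false by lia.
have -> : (f <= f - l)%N = false by lia.
have -> : (f - (f - l) = l)%N by lia.
by rewrite addKn.
Qed.

Lemma wbar_down_cross r y z l j : (2 <= l <= f)%N ->
  wbar a b f r y z (f + j) (f - l)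
  = lrec (wstar b r y z j.+1)
         ((1 - a) / (1 - b) * wstar b r y z j.+2 + (a - b) / (1 - b) * wstar b r y z j.+1)
         (fun k => if k == 0 then betamix b a r y z else betac a r y z)
         (fun k => if k == 0 then xmix b a r y z else xc a r y z) (l - 1).
Proof.
move=> /andP[l2 lf]; rewrite /wbar.
have -> : (f - l == (f + j).+1)%N = false by apply/eqP; lia.
have -> : (f + j == (f - l).+1)%N = false by apply/eqP; lia.
have -> : ((f + j).+2 <= f - l)%N = false by lia.
have -> : ((f - l).+2 <= f + j)%N by lia.
have -> : ((f + j).+1 <= f)%N = false by lia.
have -> : (f <= (f - l).+1)%N = false by lia.
have -> : (f.-1 - (f - l) = l - 1)%N by lia.
by rewrite addKn.
Qed.

Hypotheses (a0 : a != 0) (b0 : b != 0) (a1 : 1 - a != 0) (b1 : 1 - b != 0).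

Lemma wbar_up_cross1 l j : (1 <= l <= f)%N -> (1 <= j)%N ->
  wbar a b f 1 1 1 (f - l) (f + j)
  = a ^+ l * b ^+ (j - 1) * (j%:R + l%:R * (b / a) - (l + j - 1)%:R * b).
Proof.
move=> hl hj; rewrite wbar_up_cross // (@lrec_double_root _ b) //; last first.
- by case=> [|k]; rewrite /= ?xmix1 ?xc1.
- by case=> [|k]; rewrite /= ?betamix1 ?betac1.
case: l hl => [//|l] _; case: j hj => [//|j] _.
rewrite !wstar1 // !subn1 addnS /= -!natr1 natrD !exprS.
by field; rewrite a0 b0 a1.
Qed.

Lemma wbar_down_cross1 l j : (2 <= l <= f)%N ->
  wbar a b f 1 1 1 (f + j) (f - l)
  = a ^+ (l - 1) * b ^+ j * ((j + 1)%:R + (l - 1)%:R * (b / a) - (l + j - 1)%:R * b).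
Proof.
move=> hl; rewrite wbar_down_cross // (@lrec_double_root _ a) //; last first.
- by case=> [|k]; rewrite /= ?xmix1 ?xc1.
- by case=> [|k]; rewrite /= ?betamix1 ?betac1.
case: l hl => [//|l] _.
rewrite !wstar1 // !subn1 /= -!natr1 !exprS.
by field; rewrite a0 b1.
Qed.

End Junction.

Theorem lemma3 (R : realFieldType) (a b : R) (f : nat) :
  0 < a < 1 -> 0 < b < 1 -> (3 <= f)%N ->
  (forall l j : nat, (1 <= l <= f)%N -> (1 <= j)%N ->
     wbar a b f 1 1 1 (f - l) (f + j)
     = a ^+ l * b ^+ (j - 1)
       * (j%:R + l%:R * (b / a) - (l + j - 1)%:R * b)) /\
  (forall l j : nat, (2 <= l <= f)%N ->
     wbar a b f 1 1 1 (f + j) (f - l)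
     = a ^+ (l - 1) * b ^+ j
       * ((j + 1)%:R + (l - 1)%:R * (b / a) - (l + j - 1)%:R * b)) /\
  (forall l : nat, (1 <= l)%N ->
     qstar a 1 1 1 l = l%:R * a ^+ (l - 1) /\
     wstar a 1 1 1 l = a ^+ (l - 1) * (l%:R - (l - 1)%:R * a)).
Proof.
move=> /andP[a_gt0 a_lt1] /andP[b_gt0 b_lt1] _.
have a0 : a != 0 by rewrite gt_eqF.
have b0 : b != 0 by rewrite gt_eqF.
have a1 : 1 - a != 0 by rewrite subr_eq0 eq_sym lt_eqF.
have b1 : 1 - b != 0 by rewrite subr_eq0 eq_sym lt_eqF.
split; [|split].
- exact: wbar_up_cross1.
- exact: wbar_down_cross1.
- by case=> [//|l] _; rewrite subn1 /= qstar1 // wstar1.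
Qed.
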